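(* Let $X\subseteq\mathbb{R}^n$ be nonempty, closed, convex and bounded; let $F:X\to\mathbb{R}^n$ be $L_F$-Lipschitz continuous and monotone on $X$; let $H:X\to\mathbb{R}^n$ be $L_H$-Lipschitz continuous and monotone on $X$; and assume $\mathrm{SOL}(\mathrm{SOL}(X,F),H)\neq\emptyset$. Given $\gamma>0$, positive scalars $\{\eta_k\}$ and $x_0\in X$, define for $k\ge0$: $y_{k+1}=\Pi_X[x_k-\gamma(F(x_k)+\eta_kH(x_k))]$, $x_{k+1}=\Pi_X[x_k-\gamma(F(y_{k+1})+\eta_kH(y_{k+1}))]$, and $\bar y_K=\frac1K\sum_{k=0}^{K-1}y_{k+1}$. Assume $\gamma^2(L_F^2+\eta_0^2L_H^2)\le0.5$. Case 1 (diminishing regularization): Let $\eta_k=\frac{\eta_0}{(k+1)^b}$ with arbitrary $b\in(0,1)$. Then for all $K\ge2^{1/(1-b)}$: (1-i) $-B_H\,\mathrm{dist}(\bar y_K,\mathrm{SOL}(X,F))\le\mathrm{Gap}(\bar y_K,\mathrm{SOL}(X,F),H)\le\frac{D_X^2}{\gamma\eta_0}\frac{1}{K^{1-b}}$; (1-ii) $0\le\mathrm{Gap}(\bar y_K,X,F)\le\frac{D_X^2}{\gamma}\frac1K+\frac{\sqrt2\,\eta_0C_HD_X}{1-b}\frac1{K^b}$; (1-iii) if moreover $\mathrm{VI}(X,F)$ is $\alpha$-weakly sharp of order $\mathcal{M}$, then $\mathrm{Gap}(\bar y_K,\mathrm{SOL}(X,F),H)\ge -B_H\sqrt[\mathcal{M}]{\alpha^{-1}\left(\frac{D_X^2}{\gamma}\frac1K+\frac{\sqrt2\,C_HD_X\eta_0}{1-b}\frac1{K^b}\right)}$.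 Case 2 (constant regularization): Suppose $\mathrm{VI}(X,F)$ is $\alpha$-weakly sharp of order $\mathcal{M}=1$, and let $\eta_k\equiv\eta$ (so $\eta_0=\eta$) with $\eta\le\frac{\alpha}{2\|H(x^* )\|}$, where $x^*$ is an arbitrary point of $\mathrm{SOL}(\mathrm{SOL}(X,F),H)$. Then for all $K\ge1$: (2-i) $\mathrm{dist}(\bar y_K,\mathrm{SOL}(X,F))\le\frac{\|x_0-x^*\|^2}{\gamma\alpha}\frac1K$; (2-ii) $|\mathrm{Gap}(\bar y_K,\mathrm{SOL}(X,F),H)|\le\max\left\{\frac{D_X^2}{\gamma\eta},\frac{B_H\|x_0-x^*\|^2}{\gamma\alpha}\right\}\frac1K$.
   Context: $\mathrm{SOL}(Y,G)=\{x\in Y: G(x)^\top(y-x)\ge0\ \forall y\in Y\}$. $\mathrm{Gap}(x,Y,G)=\sup_{y\in Y}G(y)^\top(x-y)$. $\Pi_X$ Euclidean projection, $\mathrm{dist}(x,Y)=\|x-\Pi_Y[x]\|$. $D_X^2=\sup_{x,y\in X}\frac12\|x-y\|^2$, $B_H=\sup_{x\in\mathrm{SOL}(X,F)}\|H(x)\|$, $C_H=\sup_{x\in X}\|H(x)\|$. $\mathrm{VI}(X,F)$ is $\alpha$-weakly sharp of order $\mathcal{M}$ if there are $\alpha>0$, $\mathcal{M}\ge1$ with $F(x^* )^\top(x-x^* )\ge\alpha\,\mathrm{dist}^{\mathcal{M}}(x,\mathrm{SOL}(X,F))$ for all $x\in X$, $x^*\in\mathrm{SOL}(X,F)$. *)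

From mathcomp Require Import all_boot all_order all_algebra.
From mathcomp Require Import all_classical all_reals all_analysis.
Set Implicit Arguments. Unset Strict Implicit. Unset Printing Implicit Defensive.
Import Order.TTheory GRing.Theory Num.Theory.
Local Open Scope classical_set_scope.
Local Open Scope ring_scope.

Section Defs.
Context {R : realType} {n : nat}.
Notation V := 'rV[R]_n.

Definition vi_dotv (u v : V) : R := \sum_(i < n) u 0 i * v 0 i.
Definition vi_enorm (u : V) : R := Num.sqrt (vi_dotv u u).

Definition vi_convex_set (X : set V) : Prop :=
  forall x y t, X x -> X y -> 0 <= t -> t <= 1 -> X (t *: x + (1 - t) *: y).
Definition vi_closed (X : set V) : Prop :=
  forall (u : nat -> V) (z : V), (forall k, X (u k)) ->
    (fun k => vi_enorm (u k - z) : R^o) @ \oo --> (0 : R^o) -> X z.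
Definition vi_bounded (X : set V) : Prop :=
  exists M : R, forall x, X x -> vi_enorm x <= M.

Definition vi_is_proj (X : set V) (z p : V) : Prop :=
  X p /\ forall w, X w -> vi_enorm (z - p) <= vi_enorm (z - w).

Definition vi_lipschitz_on (X : set V) (G : V -> V) (L : R) : Prop :=
  forall x y, X x -> X y -> vi_enorm (G x - G y) <= L * vi_enorm (x - y).
Definition vi_monotone_on (X : set V) (G : V -> V) : Prop :=
  forall x y, X x -> X y -> 0 <= vi_dotv (G x - G y) (x - y).

Definition vi_SOL (Y : set V) (G : V -> V) : set V :=
  [set x | Y x /\ forall y, Y y -> 0 <= vi_dotv (G x) (y - x)].
Definition vi_Gap (x : V) (Y : set V) (G : V -> V) : R :=
  sup [set vi_dotv (G y) (x - y) | y in Y].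
Definition vi_dist (x : V) (Y : set V) : R := inf [set vi_enorm (x - y) | y in Y].
Definition vi_DX2 (X : set V) : R :=
  sup [set 2^-1 * vi_enorm (p.1 - p.2) ^+ 2 | p in [set p : V * V | X p.1 /\ X p.2]].
Definition vi_DX (X : set V) : R := Num.sqrt (vi_DX2 X).
Definition vi_BH (X : set V) (F H : V -> V) : R := sup [set vi_enorm (H x) | x in vi_SOL X F].
Definition vi_CH (X : set V) (H : V -> V) : R := sup [set vi_enorm (H x) | x in X].

Definition vi_weakly_sharp (X : set V) (F : V -> V) (alpha M : R) : Prop :=
  0 < alpha /\ 1 <= M /\
  forall x xs, X x -> vi_SOL X F xs ->
    alpha * (vi_dist x (vi_SOL X F)) `^ M <= vi_dotv (F xs) (x - xs).

Definition vi_ybar (y : nat -> V) (K : nat) : V :=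
  K%:R^-1 *: \sum_(k < K) y k.+1.
End Defs.

(* The variational
   inequality of the projection, combined with the step-size condition
   gamma^2 (L_F^2 + eta_k^2 L_H^2) <= 1/2, gives the descent inequality
     2 gamma <F(y_{k+1}) + eta_k H(y_{k+1}), y_{k+1} - z> <= |x_k - z|^2 - |x_{k+1} - z|^2
   for every z in X, and monotonicity lets F(y_{k+1}), H(y_{k+1}) be replaced by
   F(z), H(z). Summing over k and averaging bounds both gaps at ybar_K: for
   z in SOL(X,F) the F-term is nonnegative, and dividing by the nonincreasing
   eta_k before an Abel summation bounds Gap(ybar_K, SOL(X,F), H); for z in X the
   H-term is at most C_H sqrt2 D_X, and sum_k (k+1)^-b <= K^(1-b)/(1-b).
   Lower bounds on the inner gap come from Cauchy-Schwarz (-B_H dist) and from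
   weak sharpness, which turns a bound on the outer gap into one on the distance
   to SOL(X,F). With a constant eta <= alpha / (2 |H(xs)|), xs a solution of the
   bilevel problem, the H-term at xs eats at most half of the sharpness term,
   which gives the O(1/K) distance bound. *)

From mathcomp Require Import all_boot all_order all_algebra.
From mathcomp Require Import all_classical all_reals all_analysis.
From mathcomp Require Import lra ring.
Set Implicit Arguments. Unset Strict Implicit. Unset Printing Implicit Defensive.
Import Order.TTheory GRing.Theory Num.Theory.
Local Open Scope classical_set_scope.
Local Open Scope ring_scope.

Local Notation dot := vi_dotv.
Local Notation nrm := vi_enorm.

Section Euclidean.
Variables (R : realType) (n : nat).
Local Notation V := 'rV[R]_n.
Implicit Types (u v w z : V) (X : set V).

Lemma dotvC u v : dot u v = dot v u.
Proof. by apply: eq_bigr => i _; rewrite mulrC. Qed.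

Lemma dotvDl u v w : dot (u + v) w = dot u w + dot v w.
Proof. by rewrite /vi_dotv -big_split; apply: eq_bigr => i _; rewrite mxE mulrDl. Qed.

Lemma dotvZl a u v : dot (a *: u) v = a * dot u v.
Proof. by rewrite /vi_dotv mulr_sumr; apply: eq_bigr => i _; rewrite mxE mulrA. Qed.

Lemma dotvNl u v : dot (- u) v = - dot u v.
Proof. by rewrite -scaleN1r dotvZl mulN1r. Qed.

Lemma dotvDr u v w : dot w (u + v) = dot w u + dot w v.
Proof. by rewrite dotvC dotvDl !(dotvC w). Qed.

Lemma dotvZr a u v : dot v (a *: u) = a * dot v u.
Proof. by rewrite dotvC dotvZl dotvC. Qed.

Lemma dotvNr u v : dot v (- u) = - dot v u.
Proof. by rewrite dotvC dotvNl dotvC. Qed.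

Lemma dotv0 v : dot v 0 = 0.
Proof. by rewrite -(scale0r 0) dotvZr mul0r. Qed.

Definition dotvE := (dotvDl, dotvDr, dotvNl, dotvNr, dotvZl, dotvZr).

Lemma dotv_sumr (I : Type) (r : seq I) (P : pred I) (f : I -> V) w :
  dot w (\sum_(i <- r | P i) f i) = \sum_(i <- r | P i) dot w (f i).
Proof. by elim/big_rec2: _ => [|i a b _ <-]; rewrite ?dotv0 ?dotvDr. Qed.

Lemma dotvv_ge0 u : 0 <= dot u u.
Proof. by apply: sumr_ge0 => i _; rewrite -expr2 sqr_ge0. Qed.

Lemma dotvB_sym u v : dot (u - v) (u - v) = dot (v - u) (v - u).
Proof. by rewrite -opprB dotvNl dotvNr opprK. Qed.

Lemma dotvD_le u v : dot (u + v) (u + v) <= 2 * (dot u u + dot v v).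
Proof. by have := dotvv_ge0 (u - v); rewrite !dotvE (dotvC v u); lra. Qed.

Lemma dotvv_eq0 u v : dot u u = 0 -> dot u v = 0.
Proof.
move=> uu0; have u0 i : u 0 i = 0.
  have sum_sqr0 : \sum_(j < n) u 0 j ^+ 2 = 0.
    by rewrite -[RHS]uu0; apply: eq_bigr => j _; rewrite expr2.
  by apply/eqP; rewrite -sqrf_eq0 (psumr_eq0P (fun j _ => sqr_ge0 (u 0 j)) sum_sqr0).
by rewrite /vi_dotv big1 // => i _; rewrite u0 mul0r.
Qed.

Lemma enorm_ge0 u : 0 <= nrm u.
Proof. exact: sqrtr_ge0. Qed.

Lemma enorm_sqr u : nrm u ^+ 2 = dot u u.
Proof. exact: sqr_sqrtr (dotvv_ge0 u). Qed.

Lemma enormN u : nrm (- u) = nrm u.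
Proof. by rewrite /vi_enorm dotvNl dotvNr opprK. Qed.

Lemma enorm_le u c : 0 <= c -> dot u u <= c ^+ 2 -> nrm u <= c.
Proof. by move=> c0 uc; rewrite -(ger0_norm c0) -sqrtr_sqr; exact: ler_wsqrtr. Qed.

Lemma dotv_le_enorm u v : dot u v <= nrm u * nrm v.
Proof.
have [u0|u0] := eqVneq (nrm u) 0.
  by rewrite dotvv_eq0 ?u0 ?mul0r // -enorm_sqr u0 expr0n.
have [v0|v0] := eqVneq (nrm v) 0.
  by rewrite dotvC dotvv_eq0 ?v0 ?mulr0 // -enorm_sqr v0 expr0n.
have uv_gt0 : 0 < nrm u * nrm v by rewrite mulr_gt0 // lt_def ?u0 ?v0 enorm_ge0.
(* [0 <= | |v| u - |u| v |^2 = 2 |u||v| (|u||v| - u.v)] *)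
have := dotvv_ge0 (nrm v *: u - nrm u *: v).
rewrite !dotvE -!enorm_sqr (dotvC v u) => h.
have : 0 <= (nrm u * nrm v) * (nrm u * nrm v - dot u v) by lra.
by rewrite pmulr_rge0 // subr_ge0.
Qed.

Lemma dotv_ge_enorm u v : - (nrm u * nrm v) <= dot u v.
Proof. by rewrite lerNl -dotvNl -(enormN u) dotv_le_enorm. Qed.

Lemma enormD_le u v : nrm (u + v) <= nrm u + nrm v.
Proof.
apply: enorm_le; first by rewrite addr_ge0 ?enorm_ge0.
by have := dotv_le_enorm u v; rewrite !dotvE (dotvC v u) sqrrD -!enorm_sqr; lra.
Qed.

Lemma SOL_sub Y (G : V -> V) : vi_SOL Y G `<=` Y.
Proof. by move=> z []. Qed.

Lemma monotone_dotv_le X (G : V -> V) u z : vi_monotone_on X G -> X u -> X z ->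
  dot (G z) (u - z) <= dot (G u) (u - z).
Proof. by move=> mon Xu Xz; have := mon _ _ Xu Xz; rewrite dotvDl dotvNl subr_ge0. Qed.

Lemma lipschitz_dotv_le X (G : V -> V) L u v : vi_lipschitz_on X G L -> X u -> X v ->
  dot (G u - G v) (G u - G v) <= L ^+ 2 * dot (u - v) (u - v).
Proof.
move=> lip Xu Xv; rewrite -!enorm_sqr -exprMn.
by rewrite lerXn2r ?nnegrE ?enorm_ge0 ?lip // (le_trans (enorm_ge0 _) (lip _ _ Xu Xv)).
Qed.

End Euclidean.

Section Projection.
Variables (R : realType) (n : nat) (X : set 'rV[R]_n).
Hypothesis X_convex : vi_convex_set X.

Lemma proj_dotv_le0 w p z : vi_is_proj X w p -> X z -> dot (w - p) (z - p) <= 0.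
Proof.
move=> [Xp p_min] Xz; set D := dot (w - p) (z - p); set Z := dot (z - p) (z - p).
have step t : 0 < t -> t <= 1 -> 2 * D <= t * Z.
  move=> t0 t1; have := p_min _ (X_convex Xz Xp (ltW t0) t1).
  have -> : w - (t *: z + (1 - t) *: p) = (w - p) - t *: (z - p).
    by apply/rowP => i; rewrite !mxE; ring.
  move/(lerXn2r 2 (enorm_ge0 _) (enorm_ge0 _)); rewrite !enorm_sqr /D /Z.
  move: (w - p) (z - p) => a c; rewrite !dotvE (dotvC c a) => h.
  have : t * (2 * dot a c) <= t * (t * dot c c) by lra.
  by rewrite ler_pM2l.
rewrite leNgt; apply/negP => D_gt0.
have Z_ge0 : 0 <= Z := dotvv_ge0 _.
(* the optimal step [t = D / (D + Z)] gives [D^2 <= 0] *)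
have DZ_gt0 : 0 < D + Z by lra.
have := step (D / (D + Z)) (divr_gt0 D_gt0 DZ_gt0).
rewrite ler_pdivrMr // mul1r => /(_ ltac:(lra)).
rewrite mulrAC ler_pdivlMr // => h.
have : D * D <= 0 by nra.
by rewrite leNgt mulr_gt0.
Qed.

Lemma extragradient_proj_ineq x y x' z h1 h2 :
  vi_is_proj X (x - h1) y -> vi_is_proj X (x - h2) x' -> X z ->
  dot (h2 - h1) (h2 - h1) <= dot (x - y) (x - y) ->
  2 * dot h2 (y - z) <= dot (x - z) (x - z) - dot (x' - z) (x' - z).
Proof.
move=> Py Px' Xz h_lip.
have := proj_dotv_le0 Py Px'.1; have := proj_dotv_le0 Px' Xz.
have := dotvv_ge0 (h2 - h1 + (x' - y)); move: h_lip; rewrite !dotvE.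
move: (dotvC x y) (dotvC x x') (dotvC x z) (dotvC x h1) (dotvC x h2) (dotvC y x')
  (dotvC y z) (dotvC y h1) (dotvC y h2) (dotvC x' z) (dotvC x' h1) (dotvC x' h2)
  (dotvC z h1) (dotvC z h2) (dotvC h1 h2).
lra.
Qed.

End Projection.

Section SupInf.
Variables (R : realType) (n : nat).
Local Notation V := 'rV[R]_n.
Implicit Types (Y : set V) (G : V -> V).

Lemma Gap_le x Y G c : Y !=set0 ->
  (forall z, Y z -> dot (G z) (x - z) <= c) -> vi_Gap x Y G <= c.
Proof.
move=> [z0 Yz0] hc; apply: ge_sup; first by exists (dot (G z0) (x - z0)), z0.
by move=> _ [z Yz <-]; exact: hc.
Qed.

Lemma le_Gap x Y G c z : (forall z, Y z -> dot (G z) (x - z) <= c) ->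
  Y z -> dot (G z) (x - z) <= vi_Gap x Y G.
Proof.
move=> hc Yz; apply: ub_le_sup; last by exists z.
by exists c => _ [w Yw <-]; exact: hc.
Qed.

Lemma dist_ge0 x Y : Y !=set0 -> 0 <= vi_dist x Y.
Proof.
move=> [z Yz]; apply: lb_le_inf; first by exists (nrm (x - z)), z.
by move=> _ [w _ <-]; exact: enorm_ge0.
Qed.

Lemma le_mul_dist x Y B c : Y !=set0 -> 0 <= B ->
  (forall z, Y z -> c <= B * nrm (x - z)) -> c <= B * vi_dist x Y.
Proof.
move=> [z0 Yz0] B_ge0 hc; have [B0|B_neq0] := eqVneq B 0.
  by have := hc _ Yz0; rewrite B0 !mul0r.
have B_gt0 : 0 < B by rewrite lt_def B_neq0.
rewrite -ler_pdivrMl //; apply: lb_le_inf; first by exists (nrm (x - z0)), z0.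
by move=> _ [w Yw <-]; rewrite ler_pdivrMl //; exact: hc.
Qed.

End SupInf.

Section BoundedSet.
Variables (R : realType) (n : nat) (X : set 'rV[R]_n) (M : R).
Local Notation V := 'rV[R]_n.
Hypothesis X_bounded : forall x, X x -> nrm x <= M.
Implicit Types (Y : set V) (G : V -> V).

Lemma enormB_le_bound u v : X u -> X v -> nrm (u - v) <= M + M.
Proof. by move=> Xu Xv; apply: le_trans (enormD_le _ _) _; rewrite enormN lerD ?X_bounded. Qed.

Lemma lipschitz_image_bounded G L z0 : vi_lipschitz_on X G L -> X z0 ->
  exists C, forall z, X z -> nrm (G z) <= C.
Proof.
move=> lip Xz0; exists (nrm (G z0) + `|L| * (M + M)) => z Xz.
rewrite -(subrK (G z0) (G z)) addrC; apply: le_trans (enormD_le _ _) _.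
rewrite lerD2l; apply: le_trans (lip _ _ Xz Xz0) _.
apply: le_trans (ler_wpM2r (enorm_ge0 _) (ler_norm L)) _.
by rewrite ler_wpM2l ?normr_ge0 ?enormB_le_bound.
Qed.

Lemma le_Gap_lipschitz G L Y xb z : vi_lipschitz_on X G L -> Y `<=` X -> X xb -> Y z ->
  dot (G z) (xb - z) <= vi_Gap xb Y G.
Proof.
move=> lip YX Xb Yz; have [C GC] := lipschitz_image_bounded lip (YX _ Yz).
apply: (le_Gap (c := C * (M + M))) Yz => w /YX Xw.
apply: le_trans (dotv_le_enorm _ _) _.
by apply: ler_pM; rewrite ?enorm_ge0 ?GC ?enormB_le_bound.
Qed.

Lemma le_sup_enorm G L Y z : vi_lipschitz_on X G L -> Y `<=` X -> Y z ->
  nrm (G z) <= sup [set nrm (G x) | x in Y].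
Proof.
move=> lip YX Yz; have [C GC] := lipschitz_image_bounded lip (YX _ Yz).
apply: ub_le_sup; last by exists z.
by exists C => _ [w /YX Xw <-]; exact: GC.
Qed.

Lemma dotvB_le_DX2 u v : X u -> X v -> dot (u - v) (u - v) <= 2 * vi_DX2 X.
Proof.
move=> Xu Xv.
have : 2^-1 * nrm (u - v) ^+ 2 <= vi_DX2 X.
  apply: ub_le_sup; last by exists (u, v).
  exists (2^-1 * (M + M) ^+ 2) => _ [[a b] [Xa Xb] <-] /=.
  by rewrite ler_wpM2l ?invr_ge0 // lerXn2r ?nnegrE ?enorm_ge0 ?enormB_le_bound
    ?(le_trans (enorm_ge0 _) (enormB_le_bound Xa Xb)).
by rewrite enorm_sqr; lra.
Qed.

Lemma enormB_le_DX u v : X u -> X v -> nrm (u - v) <= Num.sqrt 2 * vi_DX X.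
Proof. by move=> Xu Xv; rewrite -sqrtrM // ler_wsqrtr // dotvB_le_DX2. Qed.

Lemma Gap_ge0 F L xb : vi_lipschitz_on X F L -> X xb -> 0 <= vi_Gap xb X F.
Proof. by move=> lip Xb; have := le_Gap_lipschitz lip (@subset_refl _ X) Xb Xb; rewrite subrr dotv0. Qed.

Lemma Gap_SOL_ge_dist F H L xb : vi_lipschitz_on X H L -> vi_SOL X F !=set0 -> X xb ->
  - vi_BH X F H * vi_dist xb (vi_SOL X F) <= vi_Gap xb (vi_SOL X F) H.
Proof.
move=> lip [z0 Sz0] Xb.
have H_le_BH z : vi_SOL X F z -> nrm (H z) <= vi_BH X F H.
  exact: le_sup_enorm lip (@SOL_sub _ _ _ _).
have BH_ge0 := le_trans (enorm_ge0 _) (H_le_BH _ Sz0).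
rewrite mulNr lerNl; apply: le_mul_dist => //; first by exists z0.
move=> z Sz; have := le_Gap_lipschitz lip (@SOL_sub _ _ _ _) Xb Sz.
have := dotv_ge_enorm (H z) (xb - z).
have := ler_wpM2r (enorm_ge0 (xb - z)) (H_le_BH _ Sz); lra.
Qed.

Lemma Gap_SOL_ge_weakly_sharp F H LF LH alpha m xb B :
  vi_lipschitz_on X F LF -> vi_lipschitz_on X H LH -> vi_SOL X F !=set0 ->
  vi_weakly_sharp X F alpha m -> X xb -> vi_Gap xb X F <= B ->
  - vi_BH X F H * (alpha^-1 * B) `^ m^-1 <= vi_Gap xb (vi_SOL X F) H.
Proof.
move=> lipF lipH S_neq0 [alpha_gt0 [m_ge1 sharp]] Xb GapB; have [xs Sxs] := S_neq0.
set d := vi_dist xb (vi_SOL X F).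
have dm_le : d `^ m <= alpha^-1 * B.
  rewrite ler_pdivlMl //; apply: le_trans (sharp _ _ Xb Sxs) _.
  exact: le_trans (le_Gap_lipschitz lipF (@subset_refl _ X) Xb (SOL_sub Sxs)) GapB.
have d_le : d <= (alpha^-1 * B) `^ m^-1.
  have m_gt0 : 0 < m by lra.
  rewrite -[leLHS](powRr1 (dist_ge0 _ S_neq0)) -(mulfV (lt0r_neq0 m_gt0)) powRrM.
  by rewrite ge0_ler_powR ?nnegrE ?invr_ge0 ?powR_ge0 ?(ltW m_gt0) ?(le_trans (powR_ge0 _ _) dm_le).
have BH_ge0 : 0 <= vi_BH X F H.
  exact: le_trans (enorm_ge0 _) (le_sup_enorm lipH (@SOL_sub _ _ _ _) Sxs).
apply: le_trans (Gap_SOL_ge_dist lipH S_neq0 Xb).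
by rewrite !mulNr lerN2 ler_wpM2l.
Qed.

End BoundedSet.

Lemma dotv_ybar (R : realType) (n : nat) (y : nat -> 'rV[R]_n) K w z : (0 < K)%N ->
  dot w (vi_ybar y K - z) = K%:R^-1 * \sum_(k < K) dot w (y k.+1 - z).
Proof.
move=> K_gt0; have K_neq0 : K%:R != 0 :> R by rewrite pnatr_eq0 -lt0n.
under eq_bigr => k _ do rewrite dotvDr dotvNr.
rewrite /vi_ybar dotvDr dotvNr dotvZr dotv_sumr sumrB sumr_const card_ord.
by rewrite mulrBr -[dot w z *+ K]mulr_natl mulrA mulVf // mul1r.
Qed.

Lemma ybar_in (R : realType) (n : nat) (X : set 'rV[R]_n) (y : nat -> 'rV[R]_n) K :
  vi_convex_set X -> (forall k, X (y k.+1)) -> (0 < K)%N -> X (vi_ybar y K).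
Proof.
move=> X_convex Xy; elim: K => // -[_ _|K IH _].
  by rewrite /vi_ybar big_ord1 invr1 scale1r.
have -> : vi_ybar y K.+2 = (K.+1%:R / K.+2%:R) *: vi_ybar y K.+1
     + (1 - K.+1%:R / K.+2%:R) *: y K.+2.
  rewrite /vi_ybar big_ord_recr /= -(natr1 K.+1).
  have : K.+1%:R != 0 :> R by rewrite pnatr_eq0.
  have : K.+1%:R + 1 != 0 :> R by rewrite natr1 pnatr_eq0.
  move: (K.+1%:R) => k k1_neq0 k_neq0.
  by apply/rowP => i; rewrite !mxE; field; rewrite k1_neq0 k_neq0.
apply: X_convex; [exact: IH | exact: Xy | by rewrite divr_ge0 |].
by rewrite ler_pdivrMr ?ltr0n // mul1r ler_nat.
Qed.

Section RealSequences.
Variable R : realType.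
Implicit Types (a c : nat -> R) (b : R).

Lemma powR1B (a b : R) : 0 < a -> a `^ (1 - b) = a / a `^ b.
Proof. by move=> a_gt0; rewrite powRB ?powRr1 ?(ltW a_gt0) ?(lt0r_neq0 a_gt0) ?implybT. Qed.

Lemma sumr_telescope a K : \sum_(k < K) (a k - a k.+1) = a 0%N - a K.
Proof.
rewrite -(big_mkord xpredT (fun k => a k - a k.+1)).
under eq_bigr do rewrite -opprB.
by rewrite sumrN telescope_sumr // opprB.
Qed.

Lemma sumr_weighted_telescope_le c a A K : (forall k, 0 <= a k <= A) ->
  (forall k, c k <= c k.+1) -> (forall k, 0 <= c k) ->
  \sum_(k < K.+1) c k * (a k - a k.+1) <= c K * A.
Proof.
move=> a_bnd c_incr c_ge0.
suff : \sum_(k < K.+1) c k * (a k - a k.+1) + c K * a K.+1 <= c K * A.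
  by have := mulr_ge0 (c_ge0 K) (andP (a_bnd K.+1)).1; lra.
elim: K => [|K IH].
  by rewrite big_ord_recr big_ord0 /= add0r -mulrDr subrK ler_wpM2l // (andP (a_bnd 0%N)).2.
rewrite big_ord_recr /=.
have : (c K.+1 - c K) * a K.+1 <= (c K.+1 - c K) * A.
  by rewrite ler_wpM2l ?subr_ge0 // (andP (a_bnd _)).2.
lra.
Qed.

Lemma powR_diff_ge b (j : R) : 0 < b -> b < 1 -> 1 <= j ->
  (1 - b) / j `^ b <= j `^ (1 - b) - (j - 1) `^ (1 - b).
Proof.
move=> b_gt0 b_lt1 j_ge1.
have j_gt0 : 0 < j by lra.
have jb_gt0 : 0 < j `^ b by rewrite powR_gt0.
(* Young's inequality with exponents [1/(1-b)] and [1/b] *)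
have := @conjugate_powR R ((j - 1) `^ (1 - b)) (j `^ b) (1 - b)^-1 b^-1
  (powR_ge0 _ _) (powR_ge0 _ _) ltac:(rewrite invr_gt0; lra) ltac:(by rewrite invr_gt0)
  ltac:(rewrite !invrK; lra).
rewrite -!powRrM !mulfV ?gt_eqF ?subr_gt0 // !invrK !powRr1 ?subr_ge0 ?(ltW j_gt0) // => young.
rewrite powR1B // -[X in _ <= _ - X](mulfK (lt0r_neq0 jb_gt0)) -mulrBl ler_pM2r ?invr_gt0 //.
lra.
Qed.

Lemma sum_inv_powR_le b K : 0 < b -> b < 1 ->
  \sum_(k < K) (k.+1%:R `^ b)^-1 <= K%:R `^ (1 - b) / (1 - b).
Proof.
move=> b_gt0 b_lt1; have b1_gt0 : 0 < 1 - b by lra.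
elim: K => [|K IH]; first by rewrite big_ord0 divr_ge0 ?powR_ge0 // ltW.
have := @powR_diff_ge b K.+1%:R b_gt0 b_lt1 ltac:(by rewrite ler1n).
rewrite -natr1 addrK natr1 => step.
have : (K.+1%:R `^ b)^-1 <= (K.+1%:R `^ (1 - b) - K%:R `^ (1 - b)) / (1 - b).
  by rewrite ler_pdivlMr // mulrC.
move: IH; rewrite big_ord_recr /= !mulrBl; lra.
Qed.

Lemma div_powR_nonincreasing (a b : R) : 0 <= a -> 0 <= b ->
  {homo (fun k : nat => a / k.+1%:R `^ b) : i j / (i <= j)%N >-> j <= i}.
Proof.
move=> a_ge0 b_ge0 i j ij /=.
rewrite ler_wpM2l // lef_pV2 ?posrE ?powR_gt0 // ge0_ler_powR ?nnegrE ?ler0n //.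
by rewrite ler_nat.
Qed.

Lemma div_powR_le (a b : R) k : 0 <= a -> 0 <= b -> a / k.+1%:R `^ b <= a.
Proof.
move=> a_ge0 b_ge0; rewrite ler_pdivrMr ?powR_gt0 // ler_peMr //.
by rewrite -[X in X <= _](powRr0 k.+1%:R) ler_powR ?ler1n.
Qed.

Lemma step_size_le (LF LH gamma c c0 : R) : 0 <= c <= c0 ->
  gamma ^+ 2 * (LF ^+ 2 + c0 ^+ 2 * LH ^+ 2) <= 2^-1 ->
  gamma ^+ 2 * (LF ^+ 2 + c ^+ 2 * LH ^+ 2) <= 2^-1.
Proof.
move=> /andP[c_ge0 c_le]; apply: le_trans.
by rewrite ler_wpM2l ?sqr_ge0 // lerD2l ler_wpM2r ?sqr_ge0 // lerXn2r ?nnegrE ?(le_trans c_ge0).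
Qed.

Lemma natr_gt0_of_powR2_le (c : R) K : 0 <= c -> 2 `^ c <= K%:R -> (0 < K)%N.
Proof.
move=> c_ge0 K_ge; rewrite -(ler1n R); apply: le_trans K_ge.
by rewrite -[X in X <= _](powRr0 2) ler_powR ?ler1n.
Qed.

End RealSequences.

Section Extragradient.
Variables (R : realType) (n : nat) (X : set 'rV[R]_n) (M : R).
Variables (F H : 'rV[R]_n -> 'rV[R]_n) (LF LH gamma : R) (eta : nat -> R).
Variables (x y : nat -> 'rV[R]_n).
Hypotheses (X_convex : vi_convex_set X) (X_bounded : forall z, X z -> nrm z <= M).
Hypotheses (F_lip : vi_lipschitz_on X F LF) (F_mono : vi_monotone_on X F).
Hypotheses (H_lip : vi_lipschitz_on X H LH) (H_mono : vi_monotone_on X H).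
Hypothesis SOL_neq0 : vi_SOL X F !=set0.
Hypotheses (gamma_gt0 : 0 < gamma) (eta_gt0 : forall k, 0 < eta k).
Hypothesis x0_in : X (x 0%N).
Hypothesis y_proj :
  forall k, vi_is_proj X (x k - gamma *: (F (x k) + eta k *: H (x k))) (y k.+1).
Hypothesis x_proj :
  forall k, vi_is_proj X (x k - gamma *: (F (y k.+1) + eta k *: H (y k.+1))) (x k.+1).
Hypothesis step_size : forall k, gamma ^+ 2 * (LF ^+ 2 + eta k ^+ 2 * LH ^+ 2) <= 2^-1.

Local Notation S := (vi_SOL X F).

Lemma x_in k : X (x k).
Proof. by elim: k => // k _; exact: (x_proj k).1. Qed.

Lemma y_in k : X (y k.+1).
Proof. exact: (y_proj k).1. Qed.

Lemma regularized_step_lipschitz c u v : X u -> X v ->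
  gamma ^+ 2 * (LF ^+ 2 + c ^+ 2 * LH ^+ 2) <= 2^-1 ->
  dot (gamma *: (F u + c *: H u) - gamma *: (F v + c *: H v))
      (gamma *: (F u + c *: H u) - gamma *: (F v + c *: H v)) <= dot (u - v) (u - v).
Proof.
move=> Xu Xv c_step.
have -> : gamma *: (F u + c *: H u) - gamma *: (F v + c *: H v)
    = gamma *: ((F u - F v) + c *: (H u - H v)).
  by apply/rowP => i; rewrite !mxE; ring.
have lipF := lipschitz_dotv_le F_lip Xu Xv; have lipH := lipschitz_dotv_le H_lip Xu Xv.
have Q_ge0 := dotvv_ge0 (u - v); set Q := dot (u - v) (u - v) in lipF lipH Q_ge0 *.
have sum_le := dotvD_le (F u - F v) (c *: (H u - H v)).
rewrite dotvZl dotvZr mulrA -expr2 in sum_le.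
have : c ^+ 2 * dot (H u - H v) (H u - H v) <= c ^+ 2 * (LH ^+ 2 * Q).
  by rewrite ler_wpM2l ?sqr_ge0.
move=> lipcH; rewrite dotvZl dotvZr mulrA -expr2.
apply: le_trans (_ : gamma ^+ 2 * (2 * ((LF ^+ 2 + c ^+ 2 * LH ^+ 2) * Q)) <= _).
  by rewrite ler_wpM2l ?sqr_ge0 //; lra.
by rewrite mulrCA mulrA [X in X <= _]mulrA -[leRHS]mul1r ler_wpM2r //; lra.
Qed.

Lemma descent_ineq k z : X z ->
  2 * gamma * (dot (F (y k.+1)) (y k.+1 - z) + eta k * dot (H (y k.+1)) (y k.+1 - z))
  <= dot (x k - z) (x k - z) - dot (x k.+1 - z) (x k.+1 - z).
Proof.
move=> Xz; have lip := regularized_step_lipschitz (y_in k) (x_in k) (step_size k).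
rewrite [leRHS]dotvB_sym in lip.
have := extragradient_proj_ineq X_convex (y_proj k) (x_proj k) Xz lip.
by rewrite dotvZl dotvDl dotvZl mulrA.
Qed.

Lemma descent_SOL k z : S z ->
  2 * gamma * eta k * dot (H z) (y k.+1 - z)
  <= dot (x k - z) (x k - z) - dot (x k.+1 - z) (x k.+1 - z).
Proof.
move=> /[dup] Sz [Xz z_sol]; have := descent_ineq k Xz.
have F_ge0 : 0 <= dot (F (y k.+1)) (y k.+1 - z).
  exact: le_trans (z_sol _ (y_in k)) (monotone_dotv_le F_mono (y_in k) Xz).
have : eta k * dot (H z) (y k.+1 - z) <= eta k * dot (H (y k.+1)) (y k.+1 - z).
  by rewrite ler_wpM2l ?(ltW (eta_gt0 k)) //; exact: monotone_dotv_le (y_in k) Xz.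
move=> H_le.
have : 2 * gamma * (eta k * dot (H z) (y k.+1 - z))
    <= 2 * gamma * (dot (F (y k.+1)) (y k.+1 - z) + eta k * dot (H (y k.+1)) (y k.+1 - z)).
  by rewrite ler_pM2l ?mulr_gt0 //; lra.
lra.
Qed.

Lemma descent_X k z : X z ->
  2 * gamma * dot (F z) (y k.+1 - z)
  <= dot (x k - z) (x k - z) - dot (x k.+1 - z) (x k.+1 - z)
     + 2 * gamma * (eta k * (vi_CH X H * (Num.sqrt 2 * vi_DX X))).
Proof.
move=> Xz; have := descent_ineq k Xz.
have F_le := monotone_dotv_le F_mono (y_in k) Xz.
have H_ge : - dot (H (y k.+1)) (y k.+1 - z) <= vi_CH X H * (Num.sqrt 2 * vi_DX X).
  rewrite -dotvNr opprB; apply: le_trans (dotv_le_enorm _ _) _.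
  apply: ler_pM; rewrite ?enorm_ge0 ?(enormB_le_DX X_bounded Xz (y_in k)) //.
  exact: (le_sup_enorm X_bounded H_lip (@subset_refl _ X) (y_in k)).
have := ler_wpM2l (ltW (eta_gt0 k)) H_ge.
set Q := vi_CH X H * _ => etaH_ge descent.
have : 2 * gamma * (dot (F z) (y k.+1 - z) - eta k * Q)
    <= 2 * gamma * (dot (F (y k.+1)) (y k.+1 - z) + eta k * dot (H (y k.+1)) (y k.+1 - z)).
  by rewrite ler_pM2l ?mulr_gt0 //; lra.
lra.
Qed.

Lemma Gap_X_F_le K : (0 < K)%N ->
  vi_Gap (vi_ybar y K) X F
  <= vi_DX2 X / gamma * K%:R^-1
     + (\sum_(k < K) eta k) * K%:R^-1 * (vi_CH X H * (Num.sqrt 2 * vi_DX X)).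
Proof.
move=> K_gt0; apply: Gap_le; first by exists (x 0%N).
move=> z Xz; rewrite dotv_ybar //; set Q := vi_CH X H * _.
have -> : vi_DX2 X / gamma * K%:R^-1 + (\sum_(k < K) eta k) * K%:R^-1 * Q
    = K%:R^-1 * ((2 * gamma)^-1 * (2 * vi_DX2 X) + (\sum_(k < K) eta k) * Q).
  by field; rewrite lt0r_neq0 // pnatr_eq0 -lt0n.
rewrite ler_wpM2l ?invr_ge0 ?ler0n //.
have : \sum_(k < K) dot (F z) (y k.+1 - z)
    <= \sum_(k < K) ((2 * gamma)^-1 * (dot (x k - z) (x k - z)
                       - dot (x k.+1 - z) (x k.+1 - z)) + eta k * Q).
  apply: ler_sum => k _; rewrite -(ler_pM2l (_ : 0 < 2 * gamma)) ?mulr_gt0 //.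
  by rewrite mulrDr mulrA mulfV ?mul1r ?lt0r_neq0 ?mulr_gt0 //; exact: descent_X.
rewrite big_split /= -mulr_sumr (sumr_telescope (fun k => dot (x k - z) (x k - z))) -mulr_suml.
have := dotvv_ge0 (x K - z); have := dotvB_le_DX2 X_bounded x0_in Xz.
have : 0 <= (2 * gamma)^-1 by rewrite invr_ge0 mulr_ge0 // ltW.
nra.
Qed.

Lemma Gap_SOL_H_le K : (forall k, eta k.+1 <= eta k) -> (0 < K)%N ->
  vi_Gap (vi_ybar y K) S H <= vi_DX2 X / (gamma * eta K.-1) * K%:R^-1.
Proof.
case: K => // K eta_noninc _; apply: Gap_le => // z Sz; rewrite dotv_ybar //=.
have -> : vi_DX2 X / (gamma * eta K) * K.+1%:R^-1
    = K.+1%:R^-1 * ((2 * gamma)^-1 * ((eta K)^-1 * (2 * vi_DX2 X))).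
  by field; rewrite !lt0r_neq0.
rewrite ler_wpM2l ?invr_ge0 ?ler0n //.
apply: le_trans (_ : \sum_(k < K.+1) (2 * gamma)^-1 * ((eta k)^-1
     * (dot (x k - z) (x k - z) - dot (x k.+1 - z) (x k.+1 - z))) <= _).
  apply: ler_sum => k _; rewrite ler_pdivlMl ?mulr_gt0 // ler_pdivlMl //.
  by have := descent_SOL k Sz; lra.
rewrite -mulr_sumr ler_wpM2l ?invr_ge0 ?mulr_ge0 ?(ltW gamma_gt0) //.
apply: (sumr_weighted_telescope_le (c := fun k => (eta k)^-1) (a := fun k => dot (x k - z) (x k - z))) => k /=.
- by rewrite dotvv_ge0 (dotvB_le_DX2 X_bounded (x_in k) (SOL_sub Sz)).
- by rewrite lef_pV2 ?posrE.
- by rewrite invr_ge0 ltW.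
Qed.

Section Diminishing.
Variable b : R.
Hypotheses (b_gt0 : 0 < b) (b_lt1 : b < 1).
Hypothesis etaE : forall k, eta k = eta 0%N / k.+1%:R `^ b.

Lemma Gap_X_F_le_diminishing K : (0 < K)%N ->
  vi_Gap (vi_ybar y K) X F
  <= vi_DX2 X / gamma * K%:R^-1
     + Num.sqrt 2 * eta 0%N * vi_CH X H * vi_DX X / (1 - b) * (K%:R `^ b)^-1.
Proof.
move=> K_gt0; apply: le_trans (Gap_X_F_le K_gt0) _; rewrite lerD2l.
have CH_ge0 : 0 <= vi_CH X H.
  exact: le_trans (enorm_ge0 _) (le_sup_enorm X_bounded H_lip (@subset_refl _ X) x0_in).
have sum_eta : \sum_(k < K) eta k <= eta 0%N * (K%:R `^ (1 - b) / (1 - b)).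
  under eq_bigr => k _ do rewrite etaE.
  by rewrite -mulr_sumr ler_wpM2l ?(ltW (eta_gt0 0)) ?sum_inv_powR_le.
have -> : Num.sqrt 2 * eta 0%N * vi_CH X H * vi_DX X / (1 - b) * (K%:R `^ b)^-1
    = eta 0%N * (K%:R `^ (1 - b) / (1 - b)) * K%:R^-1 * (vi_CH X H * (Num.sqrt 2 * vi_DX X)).
  rewrite powR1B ?ltr0n //; field.
  by rewrite pnatr_eq0 -lt0n K_gt0 subr_eq0 gt_eqF // lt0r_neq0 ?powR_gt0 ?ltr0n.
by rewrite ler_wpM2r ?mulr_ge0 ?sqrtr_ge0 // ler_wpM2r ?invr_ge0 ?ler0n.
Qed.

Lemma Gap_SOL_H_le_diminishing K : (0 < K)%N ->
  vi_Gap (vi_ybar y K) S H <= vi_DX2 X / (gamma * eta 0%N) * (K%:R `^ (1 - b))^-1.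
Proof.
move=> K_gt0.
have eta_noninc k : eta k.+1 <= eta k.
  by rewrite (etaE k.+1) (etaE k) div_powR_nonincreasing ?(ltW (eta_gt0 0)) ?(ltW b_gt0).
apply: le_trans (Gap_SOL_H_le eta_noninc K_gt0) _.
rewrite etaE prednK // powR1B ?ltr0n // le_eqVlt; apply/orP; left; apply/eqP.
by field; rewrite !lt0r_neq0 ?powR_gt0 ?ltr0n ?(eta_gt0 0).
Qed.

End Diminishing.

Section Constant.
Variables (alpha etac : R) (xs : 'rV[R]_n).
Hypothesis F_sharp : vi_weakly_sharp X F alpha 1.
Hypothesis etaC : forall k, eta k = etac.
Hypothesis xs_sol : vi_SOL S H xs.
Hypothesis eta_small : 2 * etac * nrm (H xs) <= alpha.

Lemma dist_SOL_le_constant K : (0 < K)%N ->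
  vi_dist (vi_ybar y K) S <= nrm (x 0%N - xs) ^+ 2 / (gamma * alpha) * K%:R^-1.
Proof.
move=> K_gt0; have [alpha_gt0 [_ sharp]] := F_sharp; have [Sxs xs_min] := xs_sol.
have Xxs := SOL_sub Sxs; have Xyb := ybar_in X_convex y_in K_gt0.
have etac_gt0 : 0 < etac by rewrite -(etaC 0%N).
set yb := vi_ybar y K; set d := vi_dist yb S; set a0 := nrm (x 0%N - xs) ^+ 2.
have d_ge0 : 0 <= d := dist_ge0 yb SOL_neq0.
have sum_le : \sum_(k < K) (dot (F xs) (y k.+1 - xs) + etac * dot (H xs) (y k.+1 - xs))
    <= (2 * gamma)^-1 * a0.
  apply: le_trans (_ : \sum_(k < K) (2 * gamma)^-1 * (dot (x k - xs) (x k - xs)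
                        - dot (x k.+1 - xs) (x k.+1 - xs)) <= _).
    apply: ler_sum => k _; rewrite ler_pdivlMl ?mulr_gt0 //.
    apply: le_trans (descent_ineq k Xxs); rewrite -(etaC k) ler_pM2l ?mulr_gt0 //.
    apply: lerD; first exact: monotone_dotv_le F_mono (y_in k) Xxs.
    by rewrite ler_wpM2l ?(ltW (eta_gt0 k)) // (monotone_dotv_le H_mono (y_in k) Xxs).
  rewrite -mulr_sumr (sumr_telescope (fun k => dot (x k - xs) (x k - xs))).
  rewrite ler_wpM2l ?invr_ge0 ?mulr_ge0 ?(ltW gamma_gt0) // /a0 enorm_sqr.
  by have := dotvv_ge0 (x K - xs); lra.
have avg_le : dot (F xs) (yb - xs) + etac * dot (H xs) (yb - xs) <= K%:R^-1 * ((2 * gamma)^-1 * a0).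
  rewrite !dotv_ybar // mulrCA -mulrDr ler_wpM2l ?invr_ge0 ?ler0n //.
  by rewrite big_split /= -mulr_sumr in sum_le.
have F_lb : alpha * d <= dot (F xs) (yb - xs).
  by have := sharp yb xs Xyb Sxs; rewrite powRr1.
have H_lb : - (nrm (H xs) * d) <= dot (H xs) (yb - xs).
  rewrite lerNl; apply: le_mul_dist (enorm_ge0 _) _ => // p Sp.
  have -> : dot (H xs) (yb - xs) = dot (H xs) (yb - p) + dot (H xs) (p - xs).
    by rewrite -dotvDr addrA subrK.
  by have := xs_min p Sp; have := dotv_ge_enorm (H xs) (yb - p); lra.
have half_d_le : alpha / 2 * d <= K%:R^-1 * ((2 * gamma)^-1 * a0).
  have etaH_le : etac * nrm (H xs) <= alpha / 2 by rewrite ler_pdivlMr // mulrC mulrA.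
  have := ler_wpM2r d_ge0 etaH_le; rewrite -mulrA.
  by have := ler_wpM2l (ltW etac_gt0) H_lb; lra.
have -> : a0 / (gamma * alpha) * K%:R^-1
    = (alpha / 2)^-1 * (K%:R^-1 * ((2 * gamma)^-1 * a0)).
  by field; rewrite !lt0r_neq0 ?ltr0n.
by rewrite ler_pdivlMl ?divr_gt0.
Qed.

Lemma abs_Gap_SOL_H_le_constant K : (0 < K)%N ->
  `|vi_Gap (vi_ybar y K) S H|
  <= Num.max (vi_DX2 X / (gamma * etac))
             (vi_BH X F H * nrm (x 0%N - xs) ^+ 2 / (gamma * alpha)) * K%:R^-1.
Proof.
move=> K_gt0; have Xyb := ybar_in X_convex y_in K_gt0.
have Gap_le_const : vi_Gap (vi_ybar y K) S H <= vi_DX2 X / (gamma * etac) * K%:R^-1.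
  have eta_noninc k : eta k.+1 <= eta k by rewrite !etaC.
  by have := Gap_SOL_H_le eta_noninc K_gt0; rewrite etaC.
have BH_ge0 : 0 <= vi_BH X F H.
  exact: le_trans (enorm_ge0 _) (le_sup_enorm X_bounded H_lip (@SOL_sub _ _ _ _) xs_sol.1).
rewrite ler_norml; apply/andP; split.
- apply: le_trans (Gap_SOL_ge_dist X_bounded H_lip SOL_neq0 Xyb).
  rewrite !mulNr lerN2; apply: le_trans (ler_wpM2l BH_ge0 (dist_SOL_le_constant K_gt0)) _.
  by rewrite !mulrA ler_wpM2r ?invr_ge0 ?ler0n // le_max lexx orbT.
- apply: le_trans Gap_le_const _.
  by rewrite ler_wpM2r ?invr_ge0 ?ler0n // le_max lexx.
Qed.

End Constant.

End Extragradient.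

Theorem theorem3p5 (R : realType) (n : nat) (X : set 'rV[R]_n)
  (F H : 'rV[R]_n -> 'rV[R]_n) (LF LH gamma : R) (eta : nat -> R)
  (x y : nat -> 'rV[R]_n) :
  X !=set0 -> vi_closed X -> vi_convex_set X -> vi_bounded X ->
  vi_lipschitz_on X F LF -> vi_monotone_on X F ->
  vi_lipschitz_on X H LH -> vi_monotone_on X H ->
  vi_SOL (vi_SOL X F) H !=set0 ->
  0 < gamma -> (forall k, 0 < eta k) -> X (x 0%N) ->
  (forall k, vi_is_proj X (x k - gamma *: (F (x k) + eta k *: H (x k))) (y k.+1)) ->
  (forall k, vi_is_proj X (x k - gamma *: (F (y k.+1) + eta k *: H (y k.+1))) (x k.+1)) ->
  gamma ^+ 2 * (LF ^+ 2 + eta 0%N ^+ 2 * LH ^+ 2) <= 2^-1 ->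
  (* Case 1: diminishing regularization *)
  (forall b : R, 0 < b -> b < 1 ->
     (forall k : nat, eta k = eta 0%N / (k.+1%:R `^ b)) ->
     forall K : nat, 2 `^ (1 - b)^-1 <= K%:R ->
       [/\ - vi_BH X F H * vi_dist (vi_ybar y K) (vi_SOL X F) <= vi_Gap (vi_ybar y K) (vi_SOL X F) H,
           vi_Gap (vi_ybar y K) (vi_SOL X F) H
             <= vi_DX2 X / (gamma * eta 0%N) * (K%:R `^ (1 - b))^-1,
           0 <= vi_Gap (vi_ybar y K) X F,
           vi_Gap (vi_ybar y K) X F
             <= vi_DX2 X / gamma * K%:R^-1
                + Num.sqrt 2 * eta 0%N * vi_CH X H * vi_DX X / (1 - b) * (K%:R `^ b)^-1
         & forall alpha M : R, vi_weakly_sharp X F alpha M ->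
             - vi_BH X F H *
               (alpha^-1 * (vi_DX2 X / gamma * K%:R^-1
                  + Num.sqrt 2 * vi_CH X H * vi_DX X * eta 0%N / (1 - b) * (K%:R `^ b)^-1))
               `^ M^-1
             <= vi_Gap (vi_ybar y K) (vi_SOL X F) H]) /\
  (* Case 2: constant regularization *)
  (forall alpha : R, vi_weakly_sharp X F alpha 1 ->
     forall etac : R, (forall k, eta k = etac) ->
     forall xs, vi_SOL (vi_SOL X F) H xs ->
       2 * etac * vi_enorm (H xs) <= alpha ->
       forall K : nat, (1 <= K)%N ->
         vi_dist (vi_ybar y K) (vi_SOL X F)
           <= vi_enorm (x 0%N - xs) ^+ 2 / (gamma * alpha) * K%:R^-1 /\
         `| vi_Gap (vi_ybar y K) (vi_SOL X F) H |
           <= Num.max (vi_DX2 X / (gamma * etac))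
                      (vi_BH X F H * vi_enorm (x 0%N - xs) ^+ 2 / (gamma * alpha))
              * K%:R^-1).
Proof.
move=> _ _ X_convex [M X_bounded] F_lip F_mono H_lip H_mono [xs0 [Sxs0 _]] gamma_gt0 eta_gt0
  x0_in y_proj x_proj step_size0.
have SOL_neq0 : vi_SOL X F !=set0 by exists xs0.
split=> [b b_gt0 b_lt1 etaE K K_ge|alpha F_sharp etac etaC xs xs_sol eta_small K K_gt0].
  (* the lower bound on [K] is only used to ensure [K >= 1] *)
  have K_gt0 : (0 < K)%N.
    by apply: natr_gt0_of_powR2_le K_ge; rewrite invr_ge0 subr_ge0 ltW.
  have step_size k : gamma ^+ 2 * (LF ^+ 2 + eta k ^+ 2 * LH ^+ 2) <= 2^-1.
    by apply: step_size_le step_size0; rewrite ltW // etaE div_powR_le ?ltW.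
  have Xyb := ybar_in X_convex (y_in y_proj) K_gt0.
  have Gap_X_F_le := Gap_X_F_le_diminishing X_convex X_bounded F_lip F_mono H_lip gamma_gt0
    eta_gt0 x0_in y_proj x_proj step_size b_gt0 b_lt1 etaE K_gt0.
  split.
  - exact: (Gap_SOL_ge_dist X_bounded H_lip SOL_neq0 Xyb).
  - exact: (Gap_SOL_H_le_diminishing X_convex X_bounded F_lip F_mono H_lip H_mono SOL_neq0
      gamma_gt0 eta_gt0 x0_in y_proj x_proj step_size b_gt0 etaE K_gt0).
  - exact: (Gap_ge0 X_bounded F_lip Xyb).
  - exact: Gap_X_F_le.
  - move=> alpha m F_sharp; apply: (Gap_SOL_ge_weakly_sharp X_bounded F_lip H_lip SOL_neq0 F_sharp Xyb).
    by rewrite [_ * vi_DX X * eta 0%N]mulrAC [_ * vi_CH X H * eta 0%N]mulrAC.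
have step_size k : gamma ^+ 2 * (LF ^+ 2 + eta k ^+ 2 * LH ^+ 2) <= 2^-1.
  by rewrite etaC -(etaC 0%N).
split.
- exact: (dist_SOL_le_constant X_convex F_lip F_mono H_lip H_mono SOL_neq0 gamma_gt0 eta_gt0
    x0_in y_proj x_proj step_size F_sharp etaC xs_sol eta_small K_gt0).
- exact: (abs_Gap_SOL_H_le_constant X_convex X_bounded F_lip F_mono H_lip H_mono SOL_neq0
    gamma_gt0 eta_gt0 x0_in y_proj x_proj step_size F_sharp etaC xs_sol eta_small K_gt0).
Qed.
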